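(* Let $\mathcal{R}$ be a cell space with finite stabiliser $G_0$, let $A$ be a finite subset of $M$, and let $\mathfrak{g}\in G/G_0$. Then $|(\cdot\triangleleft\mathfrak{g})^{-1}(A)|\leq|G_0|\cdot|A|$.
   Context: A cell space $\mathcal{R}$ consists of a group $G$ acting transitively on the left on a nonempty set $M$ via $\triangleright$, a point $m_0\in M$ and a family $(g_{m_0,m})_{m\in M}$ in $G$ with $g_{m_0,m}\triangleright m_0=m$. $G_0$ is the stabiliser of $m_0$ and $G/G_0$ the set of left cosets. The right semi-action $\triangleleft\colon M\times G/G_0\to M$ is $m\triangleleft gG_0=g_{m_0,m}g\triangleright m_0$, and $(\cdot\triangleleft\mathfrak{g})^{-1}(A)=\{m\in M: m\triangleleft\mathfrak{g}\in A\}$. *)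

From mathcomp Require Import all_boot finmap.
From mathcomp Require Import classical_sets cardinality.
Unset Printing Implicit Defensive.
Local Open Scope classical_set_scope.

Record cell_space := CellSpace {
  cs_G : choiceType;
  cs_M : choiceType;
  cs_mul : cs_G -> cs_G -> cs_G;
  cs_one : cs_G;
  cs_inv : cs_G -> cs_G;
  cs_mulA : forall x y z, cs_mul x (cs_mul y z) = cs_mul (cs_mul x y) z;
  cs_mul1g : forall x, cs_mul cs_one x = x;
  cs_mulVg : forall x, cs_mul (cs_inv x) x = cs_one;
  cs_act : cs_G -> cs_M -> cs_M;
  cs_act1 : forall m, cs_act cs_one m = m;
  cs_actM : forall g h m, cs_act (cs_mul g h) m = cs_act g (cs_act h m);
  cs_trans : forall m m', exists g, cs_act g m = m';
  cs_m0 : cs_M;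
  cs_gm : cs_M -> cs_G;
  cs_gm_spec : forall m, cs_act (cs_gm m) cs_m0 = m
}.
Arguments cs_mul {_}. Arguments cs_one {_}. Arguments cs_inv {_}.
Arguments cs_act {_}. Arguments cs_m0 {_}. Arguments cs_gm {_}.

Definition stabiliser (R : cell_space) : set (cs_G R) :=
  [set g | cs_act g (@cs_m0 R) = @cs_m0 R].

(* Right semi-action  m <| gG_0 := g_{m0,m} g |> m0  (independent of the
   representative g of the coset gG_0, since G_0 fixes m0).  A coset
   gG_0 in G/G_0 is given by any representative g. *)
Definition semiact (R : cell_space) (m : cs_M R) (g : cs_G R) : cs_M R :=
  cs_act (cs_mul (cs_gm m) g) (@cs_m0 R).

Definition semiact_preimage (R : cell_space) (g : cs_G R) (A : set (cs_M R))
  : set (cs_M R) := [set m | A (semiact R m g)].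

From mathcomp Require Import all_boot finmap.
From mathcomp Require Import classical_sets cardinality.
Local Open Scope classical_set_scope.
Local Open Scope fset_scope.

(* If [m <| g = a] then [g_{m0,m} g] and [g_{m0,a}] both send [m0] to [a], so
   they differ on the right by some [k] in [G_0] and [m = g_{m0,a} k g^-1 |> m0].
   Hence the preimage of [A] is an image of [A x G_0]. *)

Section CellSpaceGroup.
Variable R : cell_space.
Local Notation "x * y" := (@cs_mul R x y).

Lemma cs_mulgV (x : cs_G R) : x * cs_inv x = cs_one.
Proof.
set y := x * cs_inv x.
have yy : y * y = y.
  by rewrite /y -cs_mulA (@cs_mulA R (cs_inv x) x) cs_mulVg cs_mul1g.
by rewrite -(@cs_mulVg R y) -{3}yy cs_mulA cs_mulVg cs_mul1g.
Qed.

Lemma cs_mulg1 (x : cs_G R) : x * cs_one = x.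
Proof. by rewrite -(@cs_mulVg R x) cs_mulA cs_mulgV cs_mul1g. Qed.

Lemma semiact_preimage_sub_image (g : cs_G R) (A : set (cs_M R)) :
  (semiact_preimage R g A `<=`
    (fun p => cs_act (cs_gm p.1 * p.2 * cs_inv g) cs_m0) @` (A `*` stabiliser R))%classic.
Proof.
move=> m Am; set a := semiact R m g.
exists (a, cs_inv (cs_gm a) * (cs_gm m * g)); first split => //=.
  rewrite /stabiliser /= cs_actM.
  have -> : cs_act (cs_gm m * g) cs_m0 = a by [].
  by rewrite -{2}(cs_gm_spec R a) -cs_actM cs_mulVg cs_act1.
by rewrite /= cs_mulA cs_mulgV cs_mul1g -cs_mulA cs_mulgV cs_mulg1 cs_gm_spec.
Qed.

End CellSpaceGroup.

Lemma card_fsetM_le (K K' : choiceType) (A : {fset K}) (E : {fset K'}) :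
  (#|` A `*` E| <= #|` A| * #|` E|)%N.
Proof.
have sub : A `*` E `<=` [fset x in [seq (a, e) | a <- A, e <- E]].
  apply/fsubsetP => -[a e]; rewrite in_fsetM /= => /andP[Ha He].
  by rewrite !inE; apply/allpairsP; exists (a, e).
apply: leq_trans (fsubset_leq_card sub) _.
by rewrite card_fseq (leq_trans (size_undup _)) // size_allpairs.
Qed.

Lemma sub_image_setX_card_le (T1 T2 U : choiceType)
    (A : set T1) (B : set T2) (f : T1 * T2 -> U) (P : set U) :
  finite_set A -> finite_set B -> (P `<=` f @` (A `*` B))%classic ->
  finite_set P /\ (#|` fset_set P| <= #|` fset_set A| * #|` fset_set B|)%N.
Proof.
move=> finA finB sPf.
have finAB : finite_set (A `*` B)%classic by exact: finite_setX.
have finfAB : finite_set (f @` (A `*` B))%classic by exact: finite_image.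
have finP : finite_set P by exact: sub_finite_set sPf finfAB.
split=> //.
have sPfAB : fset_set P `<=` fset_set (f @` (A `*` B))%classic.
  by rewrite -fset_set_sub.
apply: leq_trans (fsubset_leq_card sPfAB) _.
rewrite fset_set_image // fset_setX //.
by apply: leq_trans (leq_imfset_card _ _ _) _; rewrite card_fsetM_le.
Qed.

Theorem corollary1 (R : cell_space) (A : set (cs_M R)) (g : cs_G R) :
  finite_set (stabiliser R) -> finite_set A ->
  finite_set (semiact_preimage R g A) /\
  (#|` fset_set (semiact_preimage R g A)| <=
     #|` fset_set (stabiliser R)| * #|` fset_set A|)%N.
Proof.
move=> finG0 finA; rewrite mulnC.
exact: sub_image_setX_card_le finA finG0 (semiact_preimage_sub_image _ g A).
Qed.
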